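(* Given $0<\alpha\le\beta<\infty$ there are positive numbers $c_0=c_0(\alpha,\beta)$, $c_1=c_1(\alpha,\beta)$ such that for every Bernstein function $g$ with rate function $r=r[g]$, \[c_0\,r(t)\le|g(z)|\le c_1\,r(t)\] whenever $t>0$ and $\operatorname{Re}z>0$ satisfy $\alpha\le t\operatorname{Re}z\le t|z|\le\beta$.
   Context: A Bernstein function $g\sim(a,b,\mu)$ is $g(z)=a+bz+\int_{(0,\infty)}(1-e^{-sz})\mu(\mathrm ds)$ ($\operatorname{Re} z>0$) with $a,b\ge0$, $\mu$ positive Radon on $(0,\infty)$, $\int\frac{s}{1+s}\mu(\mathrm ds)<\infty$. Rate function $r[g](t):=\frac a2+\frac bt+\int_{(0,\infty)}\min(s/t,1)\mu(\mathrm ds)$, $t>0$. *)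

From HB Require Import structures.
From mathcomp Require Import all_boot all_order all_algebra.
From mathcomp Require Import all_classical all_reals all_analysis.
Set Implicit Arguments. Unset Strict Implicit. Unset Printing Implicit Defensive.
Import Order.TTheory GRing.Theory Num.Theory.
Import numFieldNormedType.Exports.
Local Open Scope classical_set_scope.
Local Open Scope ring_scope.

(* A Bernstein function g ~ (a,b,mu): a, b >= 0, mu a positive (Borel) measure
   on R, considered on (0,oo), with \int_(0,oo) s/(1+s) mu(ds) < oo
   (this implies local finiteness on (0,oo), i.e. mu is Radon there). *)
Definition bernstein_triple (R : realType) (a b : R)
  (mu : {measure set R -> \bar R}) : Prop :=
  0 <= a /\ 0 <= b /\
  (\int[mu]_(s in `]0%R, +oo[) (s / (1 + s))%:E < +oo)%E.

(* For z = x + i y (x > 0):  1 - e^{-s z} = (1 - e^{-s x} cos (s y)) + i e^{-s x} sin (s y). *)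
Definition bernstein_re (R : realType) (a b : R) (mu : {measure set R -> \bar R})
  (x y : R) : R :=
  a + b * x + Rintegral mu `]0%R, +oo[ (fun s => 1 - expR (- (s * x)) * cos (s * y)).

Definition bernstein_im (R : realType) (a b : R) (mu : {measure set R -> \bar R})
  (x y : R) : R :=
  b * y + Rintegral mu `]0%R, +oo[ (fun s => expR (- (s * x)) * sin (s * y)).

Definition bernstein_abs (R : realType) (a b : R) (mu : {measure set R -> \bar R})
  (x y : R) : R :=
  Num.sqrt (bernstein_re a b mu x y ^+ 2 + bernstein_im a b mu x y ^+ 2).

Definition rate (R : realType) (a b : R) (mu : {measure set R -> \bar R}) (t : R) : R :=
  a / 2 + b / t + Rintegral mu `]0%R, +oo[ (fun s => Num.min (s / t) 1).

From HB Require Import structures.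
From mathcomp Require Import all_boot all_order all_algebra.
From mathcomp Require Import all_classical all_reals all_analysis.
From mathcomp Require Import lra measurable_realfun.
Import Order.TTheory GRing.Theory Num.Theory.
Import numFieldNormedType.Exports.
Local Open Scope classical_set_scope.
Local Open Scope ring_scope.

(* Write z = x + i y and u = s / t.  Since t x >= alpha, the real part of the
   integrand 1 - e^{-sz} is at least 1 - e^{-sx} >= min(sx, 1) / 2, which is
   comparable to min(u, 1); since t |z| <= beta, both |Re| and |Im| of the
   integrand are at most a multiple of min(s|z|, 1), again comparable to
   min(u, 1).  The terms a and b z compare with a/2 and b/t in the same way.
   Integrating against mu bounds Re g from below and |Re g| + |Im g| from
   above by multiples of r(t), and Re g <= |g| <= |Re g| + |Im g|. *)

Section elementary_bounds.
Context {R : realType}.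
Implicit Types (a u v w p q X Y B : R).

Lemma norm_sin_le w : `|sin w| <= `|w|.
Proof.
wlog w0 : w / 0 < w.
  move=> H; case: (ltgtP w 0) => [wn|wp|->]; last by rewrite sin0.
    by rewrite -normrN -sinN -(normrN w) H // oppr_gt0.
  exact: H.
have [c _] := MVT (f := sin) (df := cos) w0 (fun x _ => is_derive_sin x)
  (continuous_subspaceT (@continuous_sin R)).
rewrite sin0 !subr0 => ->.
by rewrite normrM ler_piMl // cos_max.
Qed.

Lemma norm_sin_le_min w : `|sin w| <= Num.min `|w| 1.
Proof. by rewrite le_min norm_sin_le sin_max. Qed.

Lemma oneBcos_le w : 1 - cos w <= `|w|.
Proof.
have -> : w = (w / 2) *+ 2 by rewrite -mulr_natr divfK.
rewrite cos_mulr2n cos2sin2 normrMn.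
have : sin (w / 2) ^+ 2 <= `|w / 2|.
  rewrite -[sin _ ^+ 2]ger0_norm ?sqr_ge0 // normrX.
  by apply: le_trans (norm_sin_le _); rewrite expr2 ler_piMl ?sin_max.
rewrite !mulr2n; lra.
Qed.

Lemma oneBcos_le_min w : 1 - cos w <= 2 * Num.min `|w| 1.
Proof.
have := oneBcos_le w; have := cos_geN1 w; have := normr_ge0 w.
by rewrite minEle; case: ifP => _; lra.
Qed.

Lemma expRN_le1 v : 0 <= v -> expR (- v) <= 1.
Proof. by move=> v0; rewrite expR_le1 oppr_le0. Qed.

Lemma oneBexpRN_le_min v : 1 - expR (- v) <= Num.min v 1.
Proof.
have := expR_ge1Dx (- v); have := expR_gt0 (- v).
rewrite le_min; move=> *; apply/andP; split; lra.
Qed.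

Lemma min_le_oneBexpRN v : 0 <= v -> Num.min v 1 <= 2 * (1 - expR (- v)).
Proof.
move=> v0; have E0 := expR_gt0 (- v).
have le_Ev : expR (- v) * (1 + v) <= 1.
  by rewrite -[leRHS]expR0 -(addNr v) expRD ler_wpM2l ?expR_ge1Dx ?ltW.
rewrite minEle; case: ifP => v1; last by nra.
have : expR (- v) * (1 + v) * (1 - v / 2) <= 1 - v / 2.
  by rewrite -[leRHS]mul1r ler_wpM2r //; lra.
nra.
Qed.

Lemma min_mulr_le u X B : 0 <= u -> 0 <= X -> X <= B -> 1 <= B ->
  Num.min (u * X) 1 <= B * Num.min u 1.
Proof.
move=> u0 X0 XB B1; rewrite [Num.min u 1]minEle; case: ifP => u1.
  by rewrite ge_min mulrC (ler_wpM2r u0 XB).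
by rewrite mulr1 ge_min B1 orbT.
Qed.

Lemma mulr_min_le a u X : 0 < a -> a <= X -> 0 <= u ->
  Num.min a 1 * Num.min u 1 <= Num.min (u * X) 1.
Proof.
move=> a0 aX u0.
have ma0 : 0 <= Num.min a 1 by rewrite le_min (ltW a0) ler01.
have mu0 : 0 <= Num.min u 1 by rewrite le_min u0 ler01.
rewrite le_min; apply/andP; split.
  apply: (@le_trans _ _ (a * u)); first by rewrite ler_pM // ge_min lexx.
  by rewrite mulrC ler_wpM2l.
by rewrite -[1 in leRHS]mulr1 ler_pM // ge_min lexx orbT.
Qed.

Lemma min_le_ratio v : 0 <= v -> Num.min v 1 <= 2 * (v / (1 + v)).
Proof.
move=> v0; rewrite mulrA minEle.
by case: (leP v 1) => v1; rewrite ler_pdivlMr ?mul1r; nra.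
Qed.

Lemma ler_norm_sqrt p q : `|p| <= Num.sqrt (p ^+ 2 + q ^+ 2).
Proof. by rewrite -sqrtr_sqr ler_wsqrtr // lerDl sqr_ge0. Qed.

Lemma mulr_sqrt_le_norm t x y B : 0 <= t -> t * Num.sqrt (x ^+ 2 + y ^+ 2) <= B ->
  t * `|x| <= B /\ t * `|y| <= B.
Proof.
move=> t0 tB; split; apply: le_trans tB; rewrite ler_wpM2l //.
  exact: ler_norm_sqrt.
by rewrite addrC ler_norm_sqrt.
Qed.

Lemma sqrt_le_normD p q : Num.sqrt (p ^+ 2 + q ^+ 2) <= `|p| + `|q|.
Proof.
rewrite -[leRHS]ger0_norm ?addr_ge0 // -sqrtr_sqr ler_wsqrtr //.
rewrite -[p ^+ 2]real_normK ?num_real // -[q ^+ 2]real_normK ?num_real //.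
have := mulr_ge0 (normr_ge0 p) (normr_ge0 q).
by rewrite sqrrD mulr2n; lra.
Qed.

End elementary_bounds.

Section kernel_bounds.
Context {R : realType}.
Implicit Types (a u X Y B : R).

Lemma re_kernel_ge a u X Y : 0 < a -> a <= X -> 0 <= u ->
  Num.min a 1 / 2 * Num.min u 1 <= 1 - expR (- (u * X)) * cos (u * Y).
Proof.
move=> a0 aX u0.
have uX0 : 0 <= u * X by rewrite mulr_ge0 // (le_trans (ltW a0)).
have := min_le_oneBexpRN _ uX0; have := mulr_min_le a u X a0 aX u0.
have : expR (- (u * X)) * cos (u * Y) <= expR (- (u * X)).
  by rewrite ler_piMr ?cos_le1 // ltW ?expR_gt0.
lra.
Qed.

Lemma re_kernel_le B u X Y : 0 <= u -> 0 <= X -> X <= B -> `|Y| <= B -> 1 <= B ->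
  `|1 - expR (- (u * X)) * cos (u * Y)| <= 3 * B * Num.min u 1.
Proof.
move=> u0 X0 XB YB B1.
have uX0 : 0 <= u * X by rewrite mulr_ge0.
have := oneBexpRN_le_min (u * X); have := min_mulr_le u X B u0 X0 XB B1.
have := oneBcos_le_min (u * Y); have := min_mulr_le u `|Y| B u0 (normr_ge0 Y) YB B1.
rewrite normrM (ger0_norm u0).
have := expRN_le1 _ uX0; have := cos_le1 (u * Y).
set E := expR (- (u * X)); set c := cos (u * Y) => c1 E1.
have Ec : E * c <= E by rewrite ler_piMr // ltW ?expR_gt0.
have : 0 <= (1 - E) * (1 - c) by rewrite mulr_ge0 // subr_ge0.
by rewrite (ger0_norm (_ : 0 <= 1 - E * c)); lra.
Qed.

Lemma im_kernel_le B u X Y : 0 <= u -> 0 <= X -> `|Y| <= B -> 1 <= B ->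
  `|expR (- (u * X)) * sin (u * Y)| <= B * Num.min u 1.
Proof.
move=> u0 X0 YB B1.
have E0 := expR_gt0 (- (u * X)).
rewrite normrM (gtr0_norm E0); apply: le_trans (ler_piMl _ _) _.
- exact: normr_ge0.
- by rewrite expRN_le1 // mulr_ge0.
apply: le_trans (norm_sin_le_min _) _.
by rewrite normrM (ger0_norm u0) min_mulr_le.
Qed.

End kernel_bounds.

Section kernel_measurability.
Context {R : realType} (D : set R) (x y : R).

Lemma measurable_expRN_kernel : measurable_fun D (fun s => expR (- (s * x))).
Proof.
apply: measurableT_comp; first exact: measurable_expR.
apply: measurable_funN; exact: mulrr_measurable.
Qed.

Lemma measurable_re_kernel :
  measurable_fun D (fun s => 1 - expR (- (s * x)) * cos (s * y)).
Proof.
apply: measurable_funB; first exact: measurable_cst.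
apply: measurable_funM; first exact: measurable_expRN_kernel.
apply: measurableT_comp; first exact: continuous_measurable_fun (@continuous_cos R).
exact: mulrr_measurable.
Qed.

Lemma measurable_im_kernel :
  measurable_fun D (fun s => expR (- (s * x)) * sin (s * y)).
Proof.
apply: measurable_funM; first exact: measurable_expRN_kernel.
apply: measurableT_comp; first exact: continuous_measurable_fun (@continuous_sin R).
exact: mulrr_measurable.
Qed.

End kernel_measurability.

Section rate_kernel_integrals.
Context {R : realType} {mu : {measure set R -> \bar R}} {t : R}.
Hypothesis mu_ratio_fin : (\int[mu]_(s in `]0%R, +oo[) (s / (1 + s))%:E < +oo)%E.
Hypothesis t_gt0 : 0 < t.
Local Notation D := ([set` `]0%R, +oo[%R] : set R).
Local Notation m := (fun s : R => Num.min (s / t) 1).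

Let measurable_D : measurable D. Proof. exact: measurable_itv. Qed.

Let D_gt0 s : D s -> 0 < s. Proof. by rewrite /= in_itv /= andbT. Qed.

Let m_ge0 s : 0 < s -> 0 <= m s.
Proof. by move=> s0; rewrite le_min ler01 andbT divr_ge0 // ltW. Qed.

Lemma integrable_ratio : mu.-integrable D (EFin \o (fun s => s / (1 + s))).
Proof.
apply/integrableP; split.
  apply/measurable_EFinP.
  apply: open_continuous_measurable_fun; first exact: interval_open.
  move=> s; rewrite inE => /D_gt0 s0.
  apply: (@continuousM R R id (fun s => (1 + s)^-1) s); first exact: cvg_id.
  apply: (@continuousV R R (fun s => 1 + s) s); first by rewrite gt_eqF // ltr_pwDr.
  by apply: continuousD; [exact: cst_continuous | exact: cvg_id].
apply: le_lt_trans mu_ratio_fin; rewrite le_eqVlt; apply/orP; left; apply/eqP.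
apply: eq_integral => s; rewrite inE => /D_gt0 s0 /=.
by rewrite ger0_norm // divr_ge0 // ltW //; lra.
Qed.

Lemma integrable_rate_kernel : mu.-integrable D (EFin \o m).
Proof.
pose B := Num.max t^-1 1.
have B1 : 1 <= B by rewrite le_max lexx orbT.
apply: (le_integrable measurable_D _ _
  (integrableZl measurable_D (2 * B) integrable_ratio)).
  apply/measurable_EFinP.
  by apply: measurable_minr; [exact: mulrr_measurable | exact: measurable_cst].
move=> s /D_gt0 s0 /=.
rewrite lee_fin (ger0_norm (m_ge0 s s0)); apply: le_trans (ler_norm _).
apply: le_trans (min_mulr_le s t^-1 B (ltW s0) _ _ B1) _.
- by rewrite invr_ge0 ltW.
- by rewrite le_max lexx.
by rewrite [2 * B]mulrC -mulrA ler_wpM2l ?(le_trans ler01) // min_le_ratio // ltW.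
Qed.

Lemma integrable_dominated (C : R) (f : R -> R) : measurable_fun D f ->
  (forall s, 0 < s -> `|f s| <= C * m s) -> mu.-integrable D (EFin \o f).
Proof.
move=> mf f_le.
apply: (le_integrable measurable_D _ _
  (integrableZl measurable_D C integrable_rate_kernel)).
  exact/measurable_EFinP.
by move=> s /D_gt0 s0 /=; rewrite lee_fin (le_trans (f_le s s0)) // ler_norm.
Qed.

Let integrable_scaled_rate_kernel (c : R) :
  mu.-integrable D (EFin \o (fun s => c * m s)).
Proof.
apply: (integrable_dominated `|c|).
  apply: measurable_funM; first exact: measurable_cst.
  by apply: measurable_minr; [exact: mulrr_measurable | exact: measurable_cst].
by move=> s s0; rewrite normrM (ger0_norm (m_ge0 s s0)).
Qed.

Lemma le_Rintegral_rate (C : R) (f : R -> R) : measurable_fun D f ->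
  (forall s, 0 < s -> `|f s| <= C * m s) ->
  `|\int[mu]_(s in D) f s| <= C * \int[mu]_(s in D) m s.
Proof.
move=> mf f_le; have intf := integrable_dominated _ _ mf f_le.
apply: le_trans (le_normr_Rintegral measurable_D intf) _.
rewrite -RintegralZl //; last exact: integrable_rate_kernel.
apply: le_Rintegral => //; first exact: integrable_norm.
by move=> s /D_gt0; exact: f_le.
Qed.

Lemma ge_Rintegral_rate (c C : R) (f : R -> R) : measurable_fun D f ->
  (forall s, 0 < s -> `|f s| <= C * m s) -> (forall s, 0 < s -> c * m s <= f s) ->
  c * \int[mu]_(s in D) m s <= \int[mu]_(s in D) f s.
Proof.
move=> mf f_le f_ge; rewrite -RintegralZl //; last exact: integrable_rate_kernel.
apply: le_Rintegral => //; last by move=> s /D_gt0; exact: f_ge.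
exact: integrable_dominated _ _ mf f_le.
Qed.

End rate_kernel_integrals.

Section rate_comparison.
Context {R : realType}.
Implicit Types (a b t x y c B I J : R).

Lemma mulr_rate_le_re a b t x c I J : 0 <= a -> 0 <= b -> 0 < t ->
  c <= 2 -> c <= t * x -> c * I <= J ->
  c * (a / 2 + b / t + I) <= a + b * x + J.
Proof.
move=> a0 b0 t0 c2 ctx cIJ.
have : c * a <= 2 * a by rewrite ler_wpM2r.
have : c * (b / t) <= t * x * (b / t).
  by rewrite ler_wpM2r // divr_ge0 // ltW.
have -> : t * x * (b / t) = b * x by rewrite mulrC mulrA divfK ?gt_eqF.
lra.
Qed.

Lemma norm_re_im_le_rate a b t x y B I (J1 J2 : R) : 0 <= a -> 0 <= b -> 0 < t ->
  0 <= x -> 1 <= B -> t * x <= B -> t * `|y| <= B ->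
  `|J1| <= 3 * B * I -> `|J2| <= B * I ->
  `|a + b * x + J1| + `|b * y + J2| <= 4 * B * (a / 2 + b / t + I).
Proof.
move=> a0 b0 t0 x0 B1 txB tyB J1I J2I.
have bt0 : 0 <= b / t by rewrite divr_ge0 // ltW.
have rescale z : b * z = b / t * (t * z) by rewrite mulrA divfK ?gt_eqF.
have : b * x <= b / t * B by rewrite rescale ler_wpM2l.
have : b * `|y| <= b / t * B by rewrite rescale ler_wpM2l.
have : a <= B * a by rewrite ler_peMl.
have : 0 <= b / t * B by rewrite mulr_ge0 // (le_trans ler01).
have : `|a + b * x + J1| <= a + b * x + `|J1|.
  by apply: le_trans (ler_normD _ _) _; rewrite ger0_norm ?addr_ge0 ?mulr_ge0.
have : `|b * y + J2| <= b * `|y| + `|J2|.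
  by apply: le_trans (ler_normD _ _) _; rewrite normrM (ger0_norm b0).
lra.
Qed.

End rate_comparison.

Theorem proposition4p2 (R : realType) (alpha beta : R) :
  0 < alpha -> alpha <= beta ->
  exists c0 c1 : R, 0 < c0 /\ 0 < c1 /\
    forall (a b : R) (mu : {measure set R -> \bar R}),
      bernstein_triple a b mu ->
      forall t x y : R, 0 < t -> 0 < x ->
        alpha <= t * x -> t * x <= t * Num.sqrt (x ^+ 2 + y ^+ 2) ->
        t * Num.sqrt (x ^+ 2 + y ^+ 2) <= beta ->
        c0 * rate a b mu t <= bernstein_abs a b mu x y /\
        bernstein_abs a b mu x y <= c1 * rate a b mu t.
Proof.
move=> alpha_gt0 _; pose B := Num.max beta 1; pose c0 := Num.min alpha 1 / 2.
have B1 : 1 <= B by rewrite le_max lexx orbT.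
have beta_le_B : beta <= B by rewrite le_max lexx.
have c0_gt0 : 0 < c0 by rewrite divr_gt0 // lt_min alpha_gt0 ltr01.
have [c0_le2 c0_le_alpha] : c0 <= 2 /\ c0 <= alpha.
  have : Num.min alpha 1 <= alpha by rewrite ge_min lexx.
  have : Num.min alpha 1 <= 1 by rewrite ge_min lexx orbT.
  rewrite /c0; lra.
exists c0, (4 * B); split=> //; split; first lra.
move=> a b mu [a0 [b0 mu_fin]] t x y t0 x0 alpha_le_tx _ tz_le_beta.
have [tx_le_B ty_le_B] :=
  mulr_sqrt_le_norm t x y B (ltW t0) (le_trans tz_le_beta beta_le_B).
rewrite gtr0_norm // in tx_le_B.
have tyB : `|t * y| <= B by rewrite normrM gtr0_norm.
have tx_ge0 : 0 <= t * x by rewrite mulr_ge0 // ltW.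
have u_ge0 s : 0 < s -> 0 <= s / t by move=> s0; rewrite divr_ge0 // ltW.
have rescale s z : s * z = s / t * (t * z) by rewrite mulrA divfK ?gt_eqF.
have re_le s : 0 < s ->
    `|1 - expR (- (s * x)) * cos (s * y)| <= 3 * B * Num.min (s / t) 1.
  by move=> /u_ge0 u0; rewrite (rescale s x) (rescale s y) re_kernel_le.
have im_le s : 0 < s ->
    `|expR (- (s * x)) * sin (s * y)| <= B * Num.min (s / t) 1.
  by move=> /u_ge0 u0; rewrite (rescale s x) (rescale s y) im_kernel_le.
rewrite /bernstein_abs /bernstein_re /bernstein_im /rate; split.
  apply: le_trans (ler_norm_sqrt _ _); apply: le_trans (ler_norm _).
  apply: mulr_rate_le_re => //; first exact: le_trans alpha_le_tx.
  apply: (ge_Rintegral_rate mu_fin t0 _ _ _ (measurable_re_kernel _ _ _) re_le).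
  by move=> s /u_ge0 u0; rewrite (rescale s x) (rescale s y) re_kernel_ge.
apply: le_trans (sqrt_le_normD _ _) _.
apply: norm_re_im_le_rate => //; first exact: ltW.
  exact: le_Rintegral_rate mu_fin t0 _ _ (measurable_re_kernel _ _ _) re_le.
exact: le_Rintegral_rate mu_fin t0 _ _ (measurable_im_kernel _ _ _) im_le.
Qed.
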